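(* Let $G=(V,E)$ be a graph, $d=(d(v):v\in V)$ an integer sequence, and $\mathcal{C}\in\mathcal{K}(d)$, and let $e\in E$. If $(G,\mathcal{C})$ has a CAW through $e$, then for every $\mathcal{C}'\in\mathcal{K}(d)$, $(G,\mathcal{C}')$ has a CAW through $e$.
   Context: Graphs are finite, undirected, may have parallel edges but no loops. $\mathcal{K}(d)$ is the set of all colorings $\mathcal{C}:E\to\{R,B\}$ (red/blue) such that the number of red edges incident with $v$ equals $d(v)$ for every $v\in V$. A walk $(v_0,e_1,v_1,\dots,e_m,v_m)$ is a closed alternating walk (CAW) if $v_0=v_m$, $\mathcal{C}(e_j)\ne\mathcal{C}(e_{j+1})$ for $j=1,\dots,m-1$, and $\mathcal{C}(e_m)\ne\mathcal{C}(e_1)$. A CAW is through $e$ if $e$ is one of its edges $e_j$. *)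

From mathcomp Require Import all_boot all_order all_algebra.
Set Implicit Arguments. Unset Strict Implicit. Unset Printing Implicit Defensive.

(* A (multi)graph G = (V, E): finite vertex type V, finite edge type E,
   and an endpoint map [ends : E -> V * V]; parallel edges are allowed
   (distinct edges may have equal endpoints).  Looplessness is a hypothesis
   [loopless ends].  A colouring is [C : {ffun E -> bool}], with
   [true] = red and [false] = blue. *)

Section Graphs.
Variables (V E : finType) (ends : E -> V * V).

Definition loopless : Prop := forall e : E, (ends e).1 != (ends e).2.

Definition incident (e : E) (v : V) : bool :=
  (v == (ends e).1) || (v == (ends e).2).

Definition joins (e : E) (x y : V) : bool :=
  (ends e == (x, y)) || (ends e == (y, x)).

Definition inK (d : V -> int) (C : {ffun E -> bool}) : Prop :=
  forall v : V, (#|[set e : E | incident e v && C e]| : int) = d v.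

(* A walk (v0, e1, v1, ..., em, vm) is encoded by v0 and the sequence
   [:: (e1, v1); ...; (em, vm)]. *)
Fixpoint is_walk (x : V) (s : seq (E * V)) : bool :=
  if s is (e, y) :: s' then joins e x y && is_walk y s' else true.

Definition is_CAW (C : {ffun E -> bool}) (v0 : V) (s : seq (E * V)) : bool :=
  [&& is_walk v0 s,
      last v0 [seq p.2 | p <- s] == v0 &
      cycle (fun p q : E * V => C p.1 != C q.1) s].

Definition has_CAW_through (C : {ffun E -> bool}) (e : E) : Prop :=
  exists (v0 : V) (s : seq (E * V)),
    is_CAW C v0 s /\ e \in [seq p.1 | p <- s].

End Graphs.

From mathcomp Require Import all_boot all_order all_algebra.
Set Implicit Arguments. Unset Strict Implicit. Unset Printing Implicit Defensive.

(* A colouring C turns the closed alternating walks of G into the directed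
   cycles of a digraph on the states (v, c) : V * bool, read "at v, the next
   edge has colour c": an edge f with ends x, y is traversed from (x, C f) to
   (y, ~~ C f) or from (y, C f) to (x, ~~ C f).  Forgetting directions, these
   arcs do not depend on C: f contributes the edges (x, k) -- (y, ~~ k) for
   k : bool.  So every colouring is an orientation of one fixed graph, and when
   G is loopless the out-degree of (v, c) is the number of edges of colour c
   at v, which is determined by d.  Orientations with equal out-degrees have
   the same reachability: if S is closed under one of them, the arcs with tail
   in S are equally many under both, namely the edges inside S, so S is closed
   under the other too.  Finally a CAW through e is a directed cycle through an
   arc of e; if C' reverses that arc, its reverse is an arc of C. *)

Section Orientation.
Variables (T A : finType) (ends : A -> T * T).

Definition orient (o : A -> bool) (a : A) : T * T :=
  if o a then ends a else ((ends a).2, (ends a).1).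

Definition orient_rel (o : A -> bool) : rel T :=
  fun x y => [exists a, orient o a == (x, y)].

Definition outdeg (o : A -> bool) (x : T) : nat :=
  #|[set a | (orient o a).1 == x]|.

Lemma orient_ends_in o a (S : {set T}) :
  ((orient o a).1 \in S) && ((orient o a).2 \in S) =
  ((ends a).1 \in S) && ((ends a).2 \in S).
Proof. by rewrite /orient; case: (o a); rewrite // andbC. Qed.

Lemma card_tails_in o (S : {set T}) :
  #|[set a | (orient o a).1 \in S]| = \sum_(x in S) outdeg o x.
Proof.
rewrite -sum1dep_card.
rewrite (partition_big (fun a => (orient o a).1) (fun x => x \in S)) //.
apply: eq_bigr => x xS; rewrite sum1dep_card; apply: eq_card => a.
by rewrite !inE; case: eqP => [->|_]; rewrite ?andbT ?andbF.
Qed.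

Section SameOutdeg.
Variables o o' : A -> bool.
Hypothesis same_outdeg : forall x, outdeg o x = outdeg o' x.

Lemma outdeg_closed (S : {set T}) :
  (forall a, (orient o' a).1 \in S -> (orient o' a).2 \in S) ->
  forall a, (orient o a).1 \in S -> (orient o a).2 \in S.
Proof.
move=> closed'.
set inner := [set a | ((ends a).1 \in S) && ((ends a).2 \in S)].
have inner_tails p : inner \subset [set a | (orient p a).1 \in S].
  by apply/subsetP => a; rewrite !inE -(orient_ends_in p) => /andP [].
have tails'E : [set a | (orient o' a).1 \in S] = inner.
  apply/setP => a; rewrite !inE -(orient_ends_in o').
  by apply/idP/andP => [tail_a | []]; first by split; last exact: closed'.
have /eqP tailsE : inner == [set a | (orient o a).1 \in S].
  rewrite eqEcard inner_tails -tails'E !card_tails_in /=.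
  by under eq_bigr do rewrite same_outdeg.
move=> a tail_a; have : a \in inner by rewrite tailsE inE.
by rewrite inE -(orient_ends_in o) tail_a.
Qed.

Lemma connect_orient_sub :
  subrel (connect (orient_rel o)) (connect (orient_rel o')).
Proof.
apply: connect_sub => x y /existsP [a /eqP oa].
pose S := [set z | connect (orient_rel o') x z].
have closed' a' : (orient o' a').1 \in S -> (orient o' a').2 \in S.
  rewrite !inE => /connect_trans; apply; apply: connect1.
  by apply/existsP; exists a'; rewrite -surjective_pairing.
by have := outdeg_closed closed' (a := a); rewrite oa !inE connect0; apply.
Qed.

End SameOutdeg.
End Orientation.

Section AlternatingStates.
Variables (V E : finType) (ends : E -> V * V).

Definition state_ends (p : E * bool) : (V * bool) * (V * bool) :=
  (((ends p.1).1, p.2), ((ends p.1).2, ~~ p.2)).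

Definition colour_orient (C : {ffun E -> bool}) (p : E * bool) : bool :=
  C p.1 == p.2.

Definition alt_step (C : {ffun E -> bool}) : rel (V * bool) :=
  orient_rel state_ends (colour_orient C).

Lemma joinsC f x y : joins ends f x y = joins ends f y x.
Proof. by rewrite /joins orbC. Qed.

Lemma alt_stepP (C : {ffun E -> bool}) s t :
  reflect (exists2 f, joins ends f s.1 t.1 & (s.2 == C f) && (t.2 == ~~ C f))
          (alt_step C s t).
Proof.
apply: (iffP existsP) => [[[f k]] | [f]].
  rewrite /orient /state_ends /colour_orient /=.
  have [<- | Cf_k] := eqVneq (C f) k; move=> /eqP [<- <-]; exists f => /=.
  - by rewrite /joins -surjective_pairing eqxx.
  - by rewrite !eqxx.
  - by rewrite /joins orbC -surjective_pairing eqxx.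
  - by case: (C f) k Cf_k => [] [].
case: s t => [x c] [y c'] /= /orP [] /eqP ends_f /andP [/eqP -> /eqP ->].
  by exists (f, C f); rewrite /orient /state_ends /colour_orient eqxx ends_f.
exists (f, ~~ C f); rewrite /orient /state_ends /colour_orient /= ends_f.
by case: (C f).
Qed.

Lemma outdeg_colour (C : {ffun E -> bool}) v c : loopless ends ->
  outdeg state_ends (colour_orient C) (v, c) =
  #|[set f | incident ends f v && (C f == c)]|.
Proof.
move=> ends_loopless.
rewrite /outdeg -!sum1dep_card !big_mkcond [RHS]big_mkcond.
pose tail_at f k := (orient state_ends (colour_orient C) (f, k)).1.
rewrite -(pair_bigA _ (fun f k => if tail_at f k == (v, c) then 1 else 0)).
apply: eq_bigr => f _; rewrite big_bool /tail_at /orient /state_ends.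
rewrite /colour_orient /incident /=.
(* f is not a loop, so at most one of its ends is v *)
have := ends_loopless f; rewrite ![v == _]eq_sym.
case: (C f) c => [] [] //=; rewrite ?xpair_eqE ?andbT ?andbF ?eqxx //=.
all: by case: ((ends f).1 =P v) => [->|_]; case: ((ends f).2 =P v) => [->|_];
  rewrite ?eqxx.
Qed.

Lemma card_incident_colour (D : {ffun E -> bool}) v :
  #|[set f | incident ends f v && (D f == true)]| +
  #|[set f | incident ends f v && (D f == false)]| =
  #|[set f | incident ends f v]|.
Proof.
rewrite -(cardsID [set f | D f] [set f | incident ends f v]).
by congr (_ + _); apply: eq_card => f;
  rewrite !inE; case: (D f); rewrite ?andbT ?andbF.
Qed.

Lemma outdeg_colour_eq d (C C' : {ffun E -> bool}) :
  loopless ends -> inK ends d C -> inK ends d C' ->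
  forall s, outdeg state_ends (colour_orient C) s =
            outdeg state_ends (colour_orient C') s.
Proof.
move=> ends_loopless HC HC' [v c]; rewrite !outdeg_colour //.
have red D : #|[set f | incident ends f v && (D f == true)]| =
             #|[set f | incident ends f v && D f]|.
  by apply: eq_card => f; rewrite !inE eqb_id.
have red_CC' : #|[set f | incident ends f v && (C f == true)]| =
               #|[set f | incident ends f v && (C' f == true)]|.
  by rewrite !red; have := HC v; rewrite -(HC' v) => -[].
case: c => //; apply/(@addnI #|[set f | incident ends f v && (C f == true)]|).
by rewrite {2}red_CC' !card_incident_colour.
Qed.

Section Walks.
Variable C : {ffun E -> bool}.

Definition alternating : rel (E * V) := fun p q => C p.1 != C q.1.

Definition state_after (p : E * V) : V * bool := (p.2, ~~ C p.1).

Lemma alternatingE p q : alternating p q = (~~ C p.1 == C q.1).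
Proof. by rewrite /alternating; case: (C p.1); case: (C q.1). Qed.

Lemma walk_connect p w :
  is_walk ends p.2 w -> path alternating p w ->
  connect (alt_step C) (state_after p) (state_after (last p w)).
Proof.
elim: w p => [|[f y] w IHw] p /=; first by rewrite connect0.
move=> /andP [joins_f walk_w] /andP [alt_pf path_w].
apply: connect_trans (IHw (f, y) walk_w path_w); apply: connect1.
by apply/alt_stepP; exists f; rewrite //= eqxx andbT -(alternatingE p (f, y)).
Qed.

Lemma connect_walk p t :
  connect (alt_step C) (state_after p) t ->
  exists2 w, is_walk ends p.2 w && path alternating p w
           & state_after (last p w) = t.
Proof.
move=> /connectP [ss path_ss ->]; elim: ss p path_ss => [|s ss IHss] p /=.
  by exists [::].
move=> /andP [/alt_stepP [f joins_f /andP [/eqP Cf /eqP s2]]].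
have -> : s = state_after (f, s.1).
  by rewrite /state_after -s2 -surjective_pairing.
move=> /IHss [w /andP [walk_w path_w] last_w]; exists ((f, s.1) :: w) => //=.
by rewrite joins_f walk_w path_w alternatingE -Cf eqxx.
Qed.

Lemma is_walk_cat x w1 w2 :
  is_walk ends x (w1 ++ w2) =
  is_walk ends x w1 && is_walk ends (last x [seq p.2 | p <- w1]) w2.
Proof. by elim: w1 x => [|[f y] w1 IHw1] x //=; rewrite IHw1 andbA. Qed.

Lemma is_CAW_rot x w1 w2 :
  is_CAW ends C x (w1 ++ w2) ->
  is_CAW ends C (last x [seq p.2 | p <- w1]) (w2 ++ w1).
Proof.
rewrite /is_CAW -(rot_cycle (size w1)) rot_size_cat is_walk_cat.
rewrite !map_cat !last_cat.
move=> /and3P [/andP [walk1 walk2] /eqP closed ->].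
by rewrite is_walk_cat closed walk1 walk2 eqxx.
Qed.

Lemma is_CAW_cons x p w :
  is_CAW ends C x (p :: w) =
  [&& joins ends p.1 x p.2, is_walk ends p.2 w,
      last p.2 [seq q.2 | q <- w] == x, path alternating p w
    & alternating (last p w) p].
Proof. by case: p => f y; rewrite /is_CAW /= rcons_path -andbA. Qed.

End Walks.

Lemma has_CAW_through_connect (C : {ffun E -> bool}) e :
  has_CAW_through ends C e <->
  exists x y, joins ends e x y /\ connect (alt_step C) (y, ~~ C e) (x, C e).
Proof.
split=> [[v0 [w [caw /mapP [[f y] e_in /= ef]]]] | [x [y [joins_e conn]]]].
  subst f; case/splitPr: e_in caw => w1 w2 /is_CAW_rot.
  rewrite cat_cons is_CAW_cons.
  set x := last v0 _ => /and5P [joins_e walk_w /eqP last_w path_w alt_last].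
  exists x, y; split => //; have := walk_connect walk_w path_w.
  rewrite /state_after /= -(last_map snd) /= last_w.
  by move: alt_last; rewrite alternatingE => /eqP ->.
have [w /andP [walk_w path_w] last_w] := connect_walk (p := (e, y)) conn.
exists x, ((e, y) :: w); split; last exact: mem_head.
rewrite is_CAW_cons joins_e walk_w path_w alternatingE.
by move: last_w; rewrite /state_after -(last_map snd) => -[-> ->]; rewrite !eqxx.
Qed.

End AlternatingStates.

Theorem lemma2p5 (V E : finType) (ends : E -> V * V)
  (Hloop : loopless ends) (d : V -> int) (C : {ffun E -> bool})
  (HC : inK ends d C) (e : E) :
  has_CAW_through ends C e ->
  forall C' : {ffun E -> bool}, inK ends d C' -> has_CAW_through ends C' e.
Proof.
move=> /has_CAW_through_connect [x [y [joins_e conn]]] C' HC'.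
have C_to_C' := connect_orient_sub (outdeg_colour_eq Hloop HC HC').
apply/has_CAW_through_connect; have [same | flip] := eqVneq (C' e) (C e).
  by exists x, y; rewrite same; split; last exact: C_to_C'.
(* C' traverses e backwards, and that is a single arc of C *)
have -> : C' e = ~~ C e by move: flip; case: (C' e) (C e) => [] [].
exists y, x; rewrite negbK joinsC; split=> //; apply/C_to_C'/connect1.
by apply/alt_stepP; exists e; rewrite ?eqxx.
Qed.
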